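(* Let $\Sigma=(X,\mathcal U,\phi)$ be a forward complete control system which has the CEP property. If $\Sigma$ is norm-to-integral ISS, then $\Sigma$ is uniformly locally stable (ULS).
   Context: Let $X$, $U$ be Banach spaces and let $\mathcal U$ be a normed vector space of functions $\mathbb R_+\to U$ satisfying: (shift invariance) for all $u\in\mathcal U$ and $\tau\ge0$, $u(\cdot+\tau)\in\mathcal U$ and $\|u(\cdot+\tau)\|_{\mathcal U}\le\|u\|_{\mathcal U}$; (concatenation) for all $u_1,u_2\in\mathcal U$ and $t>0$ the function equal to $u_1(\tau)$ for $\tau\in[0,t]$ and to $u_2(\tau-t)$ for $\tau>t$ belongs to $\mathcal U$. A forward complete control system is a triple $\Sigma=(X,\mathcal U,\phi)$ with $\phi:\mathbb R_+\times X\times\mathcal U\to X$ such that: $\phi(0,x,u)=x$; (causality) $\phi(t,x,u)=\phi(t,x,\tilde u)$ whenever $u|_{[0,t]}=\tilde u|_{[0,t]}$; for each $(x,u)$ the map $t\mapsto\phi(t,x,u)$ is continuous; (cocycle) $\phi(h,\phi(t,x,u),u(t+\cdot))=\phi(t+h,x,u)$ for all $t,h\ge0$, $x\in X$, $u\in\mathcal U$. Comparison functions: $\mathcal K$ = continuous strictly increasing $\gamma:\mathbb R_+\to\mathbb R_+$ with $\gamma(0)=0$; $\mathcal K_\infty$ = unbounded functions in $\mathcal K$. $\Sigma$ has the CEP property (continuity at the equilibrium point) if $\phi(t,0,0)=0$ for all $t\ge0$ and for every $\varepsilon>0$ and $h>0$ there is $\delta>0$ such that $t\in[0,h]$, $\|x\|_X\le\delta$,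 $\|u\|_{\mathcal U}\le\delta$ imply $\|\phi(t,x,u)\|_X\le\varepsilon$. $\Sigma$ is ULS if there exist $\sigma,\gamma\in\mathcal K_\infty$ and $r>0$ such that $\|\phi(t,x,u)\|_X\le\sigma(\|x\|_X)+\gamma(\|u\|_{\mathcal U})$ for all $t\ge0$, all $\|x\|_X\le r$ and all $\|u\|_{\mathcal U}\le r$. $\Sigma$ is norm-to-integral ISS if there are $\alpha\in\mathcal K$, $\psi,\sigma\in\mathcal K_\infty$ with $\int_0^t\alpha(\|\phi(s,x,u)\|_X)\,ds\le\psi(\|x\|_X)+t\,\sigma(\|u\|_{\mathcal U})$ for all $x\in X$, $u\in\mathcal U$, $t\ge0$. *)

From Stdlib Require Import Reals Lra.
Open Scope R_scope.
Set Implicit Arguments.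

Record NormedSpace : Type := {
  carrier :> Type;
  vzero : carrier;
  vadd : carrier -> carrier -> carrier;
  vopp : carrier -> carrier;
  vscal : R -> carrier -> carrier;
  vnorm : carrier -> R;
  vadd_assoc : forall x y z, vadd x (vadd y z) = vadd (vadd x y) z;
  vadd_comm : forall x y, vadd x y = vadd y x;
  vadd_0 : forall x, vadd x vzero = x;
  vadd_opp : forall x, vadd x (vopp x) = vzero;
  vscal_1 : forall x, vscal 1 x = x;
  vscal_assoc : forall a b x, vscal a (vscal b x) = vscal (a * b) x;
  vscal_distr_v : forall a x y, vscal a (vadd x y) = vadd (vscal a x) (vscal a y);
  vscal_distr_r : forall a b x, vscal (a + b) x = vadd (vscal a x) (vscal b x);
  vnorm_nonneg : forall x, 0 <= vnorm x;
  vnorm_eq0 : forall x, vnorm x = 0 -> x = vzero;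
  vnorm_scal : forall a x, vnorm (vscal a x) = Rabs a * vnorm x;
  vnorm_triangle : forall x y, vnorm (vadd x y) <= vnorm x + vnorm y
}.

Arguments vzero {_}.
Arguments vadd {_}.
Arguments vopp {_}.
Arguments vscal {_}.
Arguments vnorm {_}.

Definition vsub {V : NormedSpace} (x y : V) : V := vadd x (vopp y).

Definition complete (V : NormedSpace) : Prop :=
  forall s : nat -> V,
    (forall eps, 0 < eps -> exists N, forall m n, (N <= m)%nat -> (N <= n)%nat ->
        vnorm (vsub (s m) (s n)) < eps) ->
    exists l : V, forall eps, 0 < eps -> exists N, forall n, (N <= n)%nat ->
        vnorm (vsub (s n) l) < eps.

Definition Banach (V : NormedSpace) : Prop := complete V.

(** Elements of [Uc] are identified with functions via [ev]; [ev] is linear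
    (the vector operations are pointwise) and injective on R_+. *)
Definition function_space {U Uc : NormedSpace} (ev : Uc -> R -> U) : Prop :=
  (forall s, 0 <= s -> ev vzero s = vzero) /\
  (forall u v s, 0 <= s -> ev (vadd u v) s = vadd (ev u s) (ev v s)) /\
  (forall a u s, 0 <= s -> ev (vscal a u) s = vscal a (ev u s)) /\
  (forall u v, (forall s, 0 <= s -> ev u s = ev v s) -> u = v).

Definition shift_invariant {U Uc : NormedSpace} (ev : Uc -> R -> U) : Prop :=
  forall (u : Uc) (tau : R), 0 <= tau ->
    exists v : Uc, (forall s, 0 <= s -> ev v s = ev u (s + tau)) /\ vnorm v <= vnorm u.

Definition concatenation_closed {U Uc : NormedSpace} (ev : Uc -> R -> U) : Prop :=
  forall (u1 u2 : Uc) (t : R), 0 < t ->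
    exists w : Uc, (forall s, 0 <= s <= t -> ev w s = ev u1 s) /\
                   (forall s, t < s -> ev w s = ev u2 (s - t)).

Definition input_space {U Uc : NormedSpace} (ev : Uc -> R -> U) : Prop :=
  function_space ev /\ shift_invariant ev /\ concatenation_closed ev.

Definition control_system {X U Uc : NormedSpace} (ev : Uc -> R -> U)
    (phi : R -> X -> Uc -> X) : Prop :=
  (forall x u, phi 0 x u = x) /\
  (forall t x (u u' : Uc), 0 <= t ->
     (forall s, 0 <= s <= t -> ev u s = ev u' s) -> phi t x u = phi t x u') /\
  (forall x u t, 0 <= t -> forall eps, 0 < eps -> exists delta, 0 < delta /\
     forall s, 0 <= s -> Rabs (s - t) < delta -> vnorm (vsub (phi s x u) (phi t x u)) < eps) /\
  (forall t h x (u v : Uc), 0 <= t -> 0 <= h ->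
     (forall s, 0 <= s -> ev v s = ev u (s + t)) ->
     phi h (phi t x u) v = phi (t + h) x u).

(** * Comparison functions (as functions on R, only values on R_+ matter) *)
Definition class_K (g : R -> R) : Prop :=
  (forall t, 0 <= t -> forall eps, 0 < eps -> exists delta, 0 < delta /\
     forall s, 0 <= s -> Rabs (s - t) < delta -> Rabs (g s - g t) < eps) /\
  (forall s t, 0 <= s -> s < t -> g s < g t) /\
  g 0 = 0.

Definition class_Kinf (g : R -> R) : Prop :=
  class_K g /\ forall M, exists s, 0 <= s /\ M < g s.

Definition CEP {X Uc : NormedSpace} (phi : R -> X -> Uc -> X) : Prop :=
  (forall t, 0 <= t -> phi t vzero vzero = vzero) /\
  (forall eps h, 0 < eps -> 0 < h -> exists delta, 0 < delta /\
     forall t x u, 0 <= t <= h -> vnorm x <= delta -> vnorm u <= delta ->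
       vnorm (phi t x u) <= eps).

Definition ULS {X Uc : NormedSpace} (phi : R -> X -> Uc -> X) : Prop :=
  exists sigma gamma r, class_Kinf sigma /\ class_Kinf gamma /\ 0 < r /\
    forall t x u, 0 <= t -> vnorm x <= r -> vnorm u <= r ->
      vnorm (phi t x u) <= sigma (vnorm x) + gamma (vnorm u).

(** norm-to-integral ISS; the integrand s |-> alpha (||phi s x u||) is
    continuous on [0,t], hence Riemann integrable; the bound is required for
    every integrability proof (RiemannInt does not depend on it). *)
Definition norm_to_integral_ISS {X Uc : NormedSpace} (phi : R -> X -> Uc -> X) : Prop :=
  exists alpha psi sigma, class_K alpha /\ class_Kinf psi /\ class_Kinf sigma /\
    forall x u t, 0 <= t ->
      forall pr : Riemann_integrable (fun s => alpha (vnorm (phi s x u))) 0 t,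
        RiemannInt pr <= psi (vnorm x) + t * sigma (vnorm u).

From Stdlib Require Import Reals Lra Classical ClassicalEpsilon.
Open Scope R_scope.
Set Implicit Arguments.

(* Uniform stability: if a trajectory started in the delta-ball with an input of
   norm at most delta' ever left the eps-ball, consider its last visit sa to the
   delta-ball and its last visit sb to the eta-ball, where eta is the CEP radius
   guaranteeing norm <= eps on a time horizon 1.  Restarting at sb (cocycle
   property) shows t - sb > 1, so on the excursion [sa, t] the integral of
   alpha(|phi|) is at least alpha(delta) (T - 1) + alpha(eta).  The ISS bound
   from the restarted state caps it by psi(delta) + T sigma(delta'), which is
   smaller once alpha(delta) + psi(delta) < alpha(eta) and
   sigma(delta') < alpha(delta).

   Comparison functions: from moduli delta_m for eps = 1/(m+1) build the gauge
   g(s) = inf_m (1/(m+1) + s/delta_m).  As an infimum of affine functions it is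
   nondecreasing, vanishes at 0 and is continuous (g(s)/s is nonincreasing), and
   it bounds |phi t x u| whenever |x|, |u| <= s and s is below the radius for
   eps = 1; then s + g(s) is the required K-infinity function. *)

Lemma vscal_0_l {V : NormedSpace} (x : V) : vscal 0 x = vzero.
Proof.
  set (a := vscal 0 x).
  assert (Ha : a = vadd a a) by (unfold a; rewrite <- vscal_distr_r; f_equal; ring).
  rewrite <- (vadd_opp _ a). rewrite Ha at 2.
  rewrite <- vadd_assoc, vadd_opp, vadd_0. reflexivity.
Qed.

Lemma vopp_vscal {V : NormedSpace} (x : V) : vopp x = vscal (-1) x.
Proof.
  assert (H : vadd x (vscal (-1) x) = vzero).
  { rewrite <- (vscal_1 _ x) at 1. rewrite <- vscal_distr_r.
    replace (1 + -1) with 0 by ring. apply vscal_0_l. }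
  rewrite <- (vadd_0 _ (vopp x)), <- H, vadd_assoc, (vadd_comm _ (vopp x) x), vadd_opp.
  rewrite vadd_comm, vadd_0. reflexivity.
Qed.

Lemma vnorm_vsub_sym {V : NormedSpace} (a b : V) : vnorm (vsub b a) = vnorm (vsub a b).
Proof.
  assert (Hflip : vsub b a = vscal (-1) (vsub a b)).
  { unfold vsub. rewrite !vopp_vscal, vscal_distr_v, vscal_assoc.
    replace (-1 * -1) with 1 by ring. rewrite vscal_1, vadd_comm. reflexivity. }
  rewrite Hflip, vnorm_scal, Rabs_left by lra. ring.
Qed.

Lemma vnorm_le_vsub_add {V : NormedSpace} (a b : V) : vnorm a <= vnorm (vsub a b) + vnorm b.
Proof.
  replace a with (vadd (vsub a b) b) at 1; [apply vnorm_triangle|].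
  unfold vsub. rewrite <- vadd_assoc, (vadd_comm _ (vopp b) b), vadd_opp, vadd_0.
  reflexivity.
Qed.

Lemma vnorm_rev_triangle {V : NormedSpace} (a b : V) :
  Rabs (vnorm a - vnorm b) <= vnorm (vsub a b).
Proof.
  pose proof (vnorm_le_vsub_add a b). pose proof (vnorm_le_vsub_add b a).
  rewrite vnorm_vsub_sym in H0. apply Rabs_le. lra.
Qed.

Definition continuous_Rplus (f : R -> R) : Prop :=
  forall t, 0 <= t -> forall eps, 0 < eps -> exists delta, 0 < delta /\
    forall s, 0 <= s -> Rabs (s - t) < delta -> Rabs (f s - f t) < eps.

Lemma continuous_Rplus_comp (g f : R -> R) :
  continuous_Rplus g -> continuous_Rplus f -> (forall s, 0 <= s -> 0 <= f s) ->
  continuous_Rplus (fun s => g (f s)).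
Proof.
  intros Hg Hf Hpos t Ht eps Heps.
  destruct (Hg (f t) (Hpos t Ht) eps Heps) as [d1 [Hd1 Hnear1]].
  destruct (Hf t Ht d1 Hd1) as [d2 [Hd2 Hnear2]].
  exists d2. split; [exact Hd2|]. intros s Hs Hst.
  apply Hnear1; [apply Hpos; exact Hs|]. apply Hnear2; assumption.
Qed.

Lemma continuous_Rplus_integrable (f : R -> R) (a b : R) :
  continuous_Rplus f -> 0 <= a <= b -> Riemann_integrable f a b.
Proof.
  intros Hf Hab.
  apply Riemann_integrable_ext with (f := fun s => f (Rmax 0 s)).
  { intros y Hy. rewrite Rmin_left, Rmax_right in Hy by lra.
    rewrite Rmax_right by lra. reflexivity. }
  apply continuity_implies_RiemannInt; [lra|].
  intros y _ eps Heps.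
  destruct (Hf (Rmax 0 y) (Rmax_l 0 y) eps Heps) as [d [Hd Hnear]].
  exists d. split; [exact Hd|]. intros z [_ Hz]. apply Hnear; [apply Rmax_l|].
  assert (Hlip : Rabs (Rmax 0 z - Rmax 0 y) <= Rabs (z - y)).
  { unfold Rmax; destruct (Rle_dec 0 z), (Rle_dec 0 y);
      unfold Rabs; repeat destruct (Rcase_abs _); lra. }
  simpl in Hz. unfold R_dist in Hz. lra.
Qed.

Lemma RiemannInt_ge_const (f : R -> R) (a b c : R) (pr : Riemann_integrable f a b) :
  a <= b -> (forall x, a < x < b -> c <= f x) -> c * (b - a) <= RiemannInt pr.
Proof.
  intros Hab Hc.
  rewrite <- (RiemannInt_P15 (RiemannInt_P14 a b c)).
  apply RiemannInt_P19; [exact Hab|]. exact Hc.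
Qed.

(* The supremum of the visits below level [c] is itself a visit, by continuity. *)
Lemma last_time_below (f : R -> R) (a b c : R) :
  continuous_Rplus f -> 0 <= a <= b -> f a <= c ->
  exists s0, a <= s0 <= b /\ f s0 <= c /\ forall r, s0 < r <= b -> c < f r.
Proof.
  intros Hf Hab Ha.
  set (E := fun y => a <= y <= b /\ f y <= c).
  assert (Hbnd : bound E) by (exists b; intros y [Hy _]; lra).
  assert (Hne : exists y, E y) by (exists a; split; [lra|exact Ha]).
  destruct (completeness E Hbnd Hne) as [m [Hub Hlub]].
  assert (Ham : a <= m) by (apply Hub; split; [lra|exact Ha]).
  assert (Hmb : m <= b) by (apply Hlub; intros y [Hy _]; lra).
  exists m. split; [lra|]. split.
  - apply Rnot_lt_le; intro Hgt.
    destruct (Hf m ltac:(lra) (f m - c)) as [d [Hd Hnear]]; [lra|].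
    assert (Hvisit : exists y, E y /\ m - d < y).
    { apply NNPP. intro Hn. assert (m <= m - d); [|lra].
      apply Hlub. intros y Hy. apply Rnot_lt_le. intro Hlt. apply Hn. exists y. auto. }
    destruct Hvisit as [y [[Hy Hfy] Hyd]].
    assert (y <= m) by (apply Hub; split; auto).
    specialize (Hnear y ltac:(lra) ltac:(apply Rabs_def1; lra)).
    apply Rabs_def2 in Hnear. lra.
  - intros r Hr. apply Rnot_le_lt. intro Hle.
    assert (r <= m) by (apply Hub; split; [lra|exact Hle]). lra.
Qed.

Lemma classK_le (g : R -> R) : class_K g -> forall s t, 0 <= s -> s <= t -> g s <= g t.
Proof.
  intros [_ [Hinc _]] s t Hs Hst. destruct (Req_dec s t) as [->|Hne]; [lra|].
  left. apply Hinc; lra.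
Qed.

Lemma classK_pos (g : R -> R) : class_K g -> forall s, 0 < s -> 0 < g s.
Proof. intros [_ [Hinc H0]] s Hs. rewrite <- H0. apply Hinc; lra. Qed.

Lemma classK_small (g : R -> R) : class_K g -> forall e, 0 < e -> exists d, 0 < d /\
  forall s, 0 <= s <= d -> g s < e.
Proof.
  intros [Hc [_ H0]] e He.
  destruct (Hc 0 (Rle_refl 0) e He) as [d [Hd Hnear]].
  exists (d / 2). split; [lra|]. intros s Hs.
  specialize (Hnear s (proj1 Hs) ltac:(rewrite Rminus_0_r, Rabs_pos_eq; lra)).
  rewrite H0, Rminus_0_r in Hnear. apply Rabs_def2 in Hnear. lra.
Qed.

Lemma classK_sum_small (g1 g2 : R -> R) : class_K g1 -> class_K g2 ->
  forall e, 0 < e -> exists d, 0 < d /\ forall s, 0 <= s <= d -> g1 s + g2 s < e.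
Proof.
  intros K1 K2 e He.
  destruct (classK_small K1 (e := e / 2)) as [d1 [Hd1 Hsmall1]]; [lra|].
  destruct (classK_small K2 (e := e / 2)) as [d2 [Hd2 Hsmall2]]; [lra|].
  exists (Rmin d1 d2). split; [apply Rmin_glb_lt; assumption|]. intros s Hs.
  pose proof (Rmin_l d1 d2). pose proof (Rmin_r d1 d2).
  pose proof (Hsmall1 s ltac:(lra)). pose proof (Hsmall2 s ltac:(lra)). lra.
Qed.

Lemma Kinf_id_plus (g : R -> R) :
  continuous_Rplus g -> (forall s s', 0 <= s <= s' -> g s <= g s') ->
  (forall s, 0 <= g s) -> g 0 = 0 -> class_Kinf (fun s => s + g s).
Proof.
  intros Hc Hmono Hnn H0. split; [split; [|split]|].
  - intros t Ht eps He. destruct (Hc t Ht (eps / 2) ltac:(lra)) as [d [Hd Hnear]].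
    exists (Rmin (eps / 2) d). split; [apply Rmin_glb_lt; lra|].
    intros s Hs Hst. pose proof (Rmin_l (eps / 2) d). pose proof (Rmin_r (eps / 2) d).
    specialize (Hnear s Hs ltac:(lra)).
    replace (s + g s - (t + g t)) with ((s - t) + (g s - g t)) by ring.
    eapply Rle_lt_trans; [apply Rabs_triang|]. lra.
  - intros s t Hs Hst. pose proof (Hmono s t ltac:(lra)). lra.
  - rewrite H0. ring.
  - intro M. exists (Rabs M + 1). pose proof (Rle_abs M). pose proof (Rabs_pos M).
    pose proof (Hnn (Rabs M + 1)). split; lra.
Qed.

Lemma inv_INR_S_pos (m : nat) : 0 < / (INR m + 1).
Proof. apply Rinv_0_lt_compat. pose proof (pos_INR m). lra. Qed.

Lemma modulus_seq (P : R -> R -> Prop) :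
  (forall eps, 0 < eps -> exists delta, 0 < delta /\ P eps delta) ->
  exists dd : nat -> R, forall m, 0 < dd m /\ P (/ (INR m + 1)) (dd m).
Proof.
  intros HP.
  pose (pick m := constructive_indefinite_description _ (HP _ (inv_INR_S_pos m))).
  exists (fun m => proj1_sig (pick m)). intro m. exact (proj2_sig (pick m)).
Qed.

Section Trajectories.

Variables (X U Uc : NormedSpace) (ev : Uc -> R -> U) (phi : R -> X -> Uc -> X).

Hypothesis shift_inv : shift_invariant ev.
Hypothesis phi_0 : forall x u, phi 0 x u = x.
Hypothesis phi_cont : forall x u t, 0 <= t -> forall eps, 0 < eps -> exists delta,
  0 < delta /\ forall s, 0 <= s -> Rabs (s - t) < delta ->
    vnorm (vsub (phi s x u) (phi t x u)) < eps.
Hypothesis phi_cocycle : forall t h x (u v : Uc), 0 <= t -> 0 <= h ->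
  (forall s, 0 <= s -> ev v s = ev u (s + t)) ->
  phi h (phi t x u) v = phi (t + h) x u.

Lemma vnorm_phi_continuous x u : continuous_Rplus (fun s => vnorm (phi s x u)).
Proof.
  intros t Ht eps Heps. destruct (phi_cont x u Ht Heps) as [d [Hd Hnear]].
  exists d. split; [exact Hd|]. intros s Hs Hst.
  eapply Rle_lt_trans; [apply vnorm_rev_triangle|]. apply Hnear; assumption.
Qed.

Lemma phi_restart x u s : 0 <= s -> exists v : Uc, vnorm v <= vnorm u /\
  forall h, 0 <= h -> phi h (phi s x u) v = phi (s + h) x u.
Proof.
  intros Hs. destruct (shift_inv u Hs) as [v [Hv Hnorm]].
  exists v. split; [exact Hnorm|]. intros h Hh. apply phi_cocycle; assumption.
Qed.

Lemma nti_ISS_excursion_bound (alpha psi sigma : R -> R) :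
  class_K alpha ->
  (forall x u t, 0 <= t ->
     forall pr : Riemann_integrable (fun s => alpha (vnorm (phi s x u))) 0 t,
       RiemannInt pr <= psi (vnorm x) + t * sigma (vnorm u)) ->
  forall y v T a b, 1 <= T ->
  (forall h, 0 < h < T - 1 -> a <= vnorm (phi h y v)) ->
  (forall h, T - 1 < h < T -> b <= vnorm (phi h y v)) ->
  0 <= a -> 0 <= b ->
  alpha a * (T - 1) + alpha b <= psi (vnorm y) + T * sigma (vnorm v).
Proof.
  intros Ka Hiss y v T a b HT Ha Hb Ha0 Hb0.
  assert (Hint : forall c d, 0 <= c <= d ->
            Riemann_integrable (fun s => alpha (vnorm (phi s y v))) c d).
  { intros c d Hcd. apply continuous_Rplus_integrable; [|exact Hcd].
    apply continuous_Rplus_comp; [exact (proj1 Ka)|apply vnorm_phi_continuous|].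
    intros; apply vnorm_nonneg. }
  pose proof (Hint 0 (T - 1) ltac:(lra)) as pr1.
  pose proof (Hint (T - 1) T ltac:(lra)) as pr2.
  pose proof (Hint 0 T ltac:(lra)) as pr.
  assert (Hlow1 : alpha a * (T - 1 - 0) <= RiemannInt pr1).
  { apply RiemannInt_ge_const; [lra|]. intros h Hh. apply (classK_le Ka); auto. }
  assert (Hlow2 : alpha b * (T - (T - 1)) <= RiemannInt pr2).
  { apply RiemannInt_ge_const; [lra|]. intros h Hh. apply (classK_le Ka); auto. }
  pose proof (RiemannInt_P26 pr1 pr2 pr). pose proof (Hiss y v T ltac:(lra) pr).
  lra.
Qed.

Lemma uniform_stability :
  (forall eps h, 0 < eps -> 0 < h -> exists delta, 0 < delta /\
     forall t x u, 0 <= t <= h -> vnorm x <= delta -> vnorm u <= delta ->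
       vnorm (phi t x u) <= eps) ->
  norm_to_integral_ISS phi ->
  forall eps, 0 < eps -> exists delta, 0 < delta /\ forall t x u, 0 <= t ->
    vnorm x <= delta -> vnorm u <= delta -> vnorm (phi t x u) <= eps.
Proof.
  intros Hcep [alpha [psi [sigma [Ka [[Kp _] [[Ks _] Hiss]]]]]] eps Heps.
  destruct (Hcep eps 1 Heps Rlt_0_1) as [eta [Heta Hce]].
  destruct (classK_sum_small Ka Kp (classK_pos Ka Heta)) as [d0 [Hd0 Hsmall]].
  pose proof (Rmin_l eta d0). pose proof (Rmin_r eta d0).
  set (rho := Rmin eta d0) in *.
  assert (Hrho : 0 < rho) by (unfold rho; apply Rmin_glb_lt; lra).
  assert (Hrho_small : alpha rho + psi rho < alpha eta) by (apply Hsmall; lra).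
  destruct (classK_small Ks (classK_pos Ka Hrho)) as [d [Hd Hsig_small]].
  exists (Rmin rho d). split; [apply Rmin_glb_lt; lra|].
  intros t x u Ht Hx Hu.
  pose proof (Rmin_l rho d). pose proof (Rmin_r rho d). pose proof (vnorm_nonneg _ u).
  apply Rnot_lt_le; intro Hexit.
  pose proof (vnorm_phi_continuous x u) as Hc.
  assert (Hstart : vnorm (phi 0 x u) <= rho) by (rewrite phi_0; lra).
  destruct (last_time_below Hc (conj (Rle_refl 0) Ht) Hstart)
    as [sa [Hsa [Hsa_le Hsa_after]]].
  destruct (last_time_below Hc (conj (Rle_refl 0) Ht) (c := eta)) as [sb [Hsb [Hsb_le Hsb_after]]];
    [lra|].
  assert (Hlong : 1 < t - sb).
  { apply Rnot_le_lt; intro Hshort.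
    destruct (phi_restart x u (proj1 Hsb)) as [w [Hw Hrestart]].
    pose proof (Hce (t - sb) (phi sb x u) w ltac:(lra) Hsb_le ltac:(lra)) as Hsmall_t.
    rewrite Hrestart, Rplus_minus in Hsmall_t by lra. lra. }
  assert (Hsab : sa <= sb).
  { apply Rnot_lt_le; intro Hlt. pose proof (Hsb_after sa ltac:(lra)). lra. }
  destruct (phi_restart x u (proj1 Hsa)) as [v [Hv Hrestart]].
  assert (Hpsi : psi (vnorm (phi sa x u)) <= psi rho)
    by (apply (classK_le Kp); [apply vnorm_nonneg|exact Hsa_le]).
  assert (Hsig : (t - sa) * sigma (vnorm v) <= (t - sa) * alpha rho).
  { apply Rmult_le_compat_l; [lra|]. left. apply Hsig_small.
    pose proof (vnorm_nonneg _ v). lra. }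
  enough (alpha rho * (t - sa - 1) + alpha eta
            <= psi (vnorm (phi sa x u)) + (t - sa) * sigma (vnorm v)) by lra.
  apply (@nti_ISS_excursion_bound alpha psi sigma Ka Hiss); [lra| | |lra|lra];
    intros h Hh; rewrite Hrestart by lra; left.
  - apply Hsa_after. lra.
  - apply Hsb_after. lra.
Qed.

End Trajectories.

Section Gauge.

Variable dd : nat -> R.
Hypothesis dd_pos : forall m, 0 < dd m.

(* [Rabs] keeps every term positive, so the infimum exists for every [s]. *)
Definition gauge_term (m : nat) (s : R) : R := / (INR m + 1) + Rabs s / dd m.

Lemma gauge_term_pos m s : 0 < gauge_term m s.
Proof.
  unfold gauge_term. pose proof (inv_INR_S_pos m).
  assert (0 <= Rabs s / dd m).
  { apply Rmult_le_pos; [apply Rabs_pos|left; apply Rinv_0_lt_compat, dd_pos]. }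
  lra.
Qed.

Lemma exists_gauge : exists g : R -> R,
  (forall s m, g s <= gauge_term m s) /\
  (forall s e, (forall m, e <= gauge_term m s) -> e <= g s).
Proof.
  set (E := fun s y => exists m, y = - gauge_term m s).
  assert (Hlub : forall s, {l | is_lub (E s) l}).
  { intro s. apply completeness.
    - exists 0. intros y [m ->]. pose proof (gauge_term_pos m s). lra.
    - exists (- gauge_term 0 s). exists 0%nat. reflexivity. }
  exists (fun s => - proj1_sig (Hlub s)). split.
  - intros s m. destruct (proj2_sig (Hlub s)) as [Hub _].
    assert (- gauge_term m s <= proj1_sig (Hlub s)) by (apply Hub; exists m; reflexivity).
    lra.
  - intros s e He. destruct (proj2_sig (Hlub s)) as [_ Hleast].
    assert (proj1_sig (Hlub s) <= - e); [|lra].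
    apply Hleast. intros y [m ->]. specialize (He m). lra.
Qed.

Variable g : R -> R.
Hypothesis gauge_lb : forall s m, g s <= gauge_term m s.
Hypothesis gauge_glb : forall s e, (forall m, e <= gauge_term m s) -> e <= g s.

Lemma gauge_nonneg s : 0 <= g s.
Proof. apply gauge_glb. intro m. left. apply gauge_term_pos. Qed.

Lemma gauge_approx s e : g s < e -> exists m, gauge_term m s < e.
Proof.
  intro Hlt. apply NNPP. intro Hn. assert (e <= g s); [|lra].
  apply gauge_glb. intro m. apply Rnot_lt_le. intro Hm. apply Hn. exists m. exact Hm.
Qed.

Lemma gauge_small_at_0 e : 0 < e -> exists d, 0 < d /\ forall s, 0 <= s < d -> g s < e.
Proof.
  intro He. destruct (archimed_cor1 (e / 2) ltac:(lra)) as [N [HN HN0]].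
  pose proof (dd_pos N).
  exists (e / 2 * dd N). split; [apply Rmult_lt_0_compat; lra|]. intros s Hs.
  assert (/ (INR N + 1) < / INR N).
  { apply Rinv_lt_contravar; [|lra]. apply lt_0_INR in HN0. nra. }
  assert (s / dd N < e / 2) by (apply Rmult_lt_reg_r with (dd N); [lra|]; field_simplify; lra).
  pose proof (gauge_lb s N). unfold gauge_term in *. rewrite Rabs_pos_eq in * by lra. lra.
Qed.

Lemma gauge_0 : g 0 = 0.
Proof.
  apply Rle_antisym; [|apply gauge_nonneg]. apply Rnot_lt_le. intro Hpos.
  destruct (gauge_small_at_0 Hpos) as [d [Hd Hsmall]].
  specialize (Hsmall 0 ltac:(lra)). lra.
Qed.

Lemma gauge_mono s s' : 0 <= s <= s' -> g s <= g s'.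
Proof.
  intros Hs. apply gauge_glb. intro m. eapply Rle_trans; [apply gauge_lb|].
  unfold gauge_term. rewrite !Rabs_pos_eq by lra.
  apply Rplus_le_compat_l, Rmult_le_compat_r; [left; apply Rinv_0_lt_compat, dd_pos|lra].
Qed.

(* Termwise, [s * gauge_term m s' <= s' * gauge_term m s] since the terms are affine
   with nonnegative intercept. *)
Lemma gauge_sublinear s s' : 0 < s <= s' -> s * g s' <= s' * g s.
Proof.
  intros Hs.
  assert (Hratio : s * g s' / s' <= g s).
  { apply gauge_glb. intro m. pose proof (gauge_lb s' m) as Hm. unfold gauge_term in *.
    rewrite !Rabs_pos_eq in * by lra.
    pose proof (inv_INR_S_pos m). pose proof (dd_pos m).
    set (a := / (INR m + 1)) in *.
    assert (s * g s' / s' <= s * (a + s' / dd m) / s').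
    { apply Rmult_le_compat_r; [left; apply Rinv_0_lt_compat; lra|].
      apply Rmult_le_compat_l; lra. }
    assert (s * (a + s' / dd m) / s' = a * (s / s') + s / dd m) by (field; lra).
    assert (s / s' <= 1)
      by (apply Rmult_le_reg_r with s'; [lra|]; field_simplify; lra).
    nra. }
  apply (Rmult_le_compat_r s') in Hratio; [|lra].
  replace (s * g s' / s' * s') with (s * g s') in Hratio by (field; lra). lra.
Qed.

Lemma gauge_continuous : continuous_Rplus g.
Proof.
  intros t Ht eps He. destruct (Req_dec t 0) as [->|Ht0].
  { destruct (gauge_small_at_0 He) as [d [Hd Hsmall]].
    exists d. split; [exact Hd|]. intros s Hs Hst.
    rewrite Rminus_0_r, Rabs_pos_eq in Hst by lra.
    rewrite gauge_0, Rminus_0_r, Rabs_pos_eq by apply gauge_nonneg.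
    apply Hsmall. lra. }
  pose proof (gauge_nonneg t).
  set (d := eps * t / (g t + 1)).
  assert (Hd : 0 < d) by (unfold d; apply Rdiv_lt_0_compat; nra).
  exists d. split; [exact Hd|]. intros s Hs Hst.
  (* Monotonicity and sublinearity make [g] locally Lipschitz at [t > 0]. *)
  assert (Hlip : t * Rabs (g s - g t) <= Rabs (s - t) * g t).
  { destruct (Rle_dec t s) as [Hts|Hts].
    - pose proof (gauge_sublinear (conj (ltac:(lra) : 0 < t) Hts)).
      pose proof (gauge_mono (conj Ht Hts)).
      rewrite !Rabs_pos_eq by lra. nra.
    - pose proof (gauge_mono (conj Hs (ltac:(lra) : s <= t))).
      rewrite !Rabs_left1 by lra.
      destruct (Req_dec s 0) as [->|Hs0]; [rewrite gauge_0; nra|].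
      pose proof (gauge_sublinear (conj (ltac:(lra) : 0 < s) (ltac:(lra) : s <= t))).
      nra. }
  assert (Hdg : d * g t < eps * t).
  { unfold d. apply Rmult_lt_reg_r with (g t + 1); [lra|]. field_simplify; nra. }
  assert (Rabs (s - t) * g t <= d * g t) by (apply Rmult_le_compat_r; lra).
  apply Rmult_lt_reg_l with t; lra.
Qed.

Lemma gauge_majorant y s : 0 <= s -> y <= 1 ->
  (forall m, s <= dd m -> y <= / (INR m + 1)) -> y <= g s.
Proof.
  intros Hs Hy1 Hy. apply Rnot_lt_le. intro Hlt.
  destruct (gauge_approx Hlt) as [m Hm]. unfold gauge_term in Hm.
  rewrite Rabs_pos_eq in Hm by exact Hs.
  pose proof (dd_pos m). pose proof (inv_INR_S_pos m).
  destruct (Rle_dec s (dd m)) as [Hle|Hgt].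
  - specialize (Hy m Hle).
    assert (0 <= s / dd m) by (apply Rmult_le_pos; [lra|left; apply Rinv_0_lt_compat; lra]).
    lra.
  - assert (1 < s / dd m)
      by (apply Rmult_lt_reg_r with (dd m); [lra|]; field_simplify; lra).
    lra.
Qed.

End Gauge.

Theorem mainTheorem2 (X U Uc : NormedSpace) (ev : Uc -> R -> U)
    (phi : R -> X -> Uc -> X) :
  Banach X -> Banach U -> input_space ev -> control_system ev phi ->
  CEP phi -> norm_to_integral_ISS phi -> ULS phi.
Proof.
  intros _ _ [_ [shift_inv _]] [phi_0 [_ [phi_cont phi_cocycle]]] [_ Hcep] Hiss.
  pose proof (uniform_stability shift_inv phi_0 phi_cont phi_cocycle Hcep Hiss) as Hstab.
  destruct (modulus_seq _ Hstab) as [dd Hdd].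
  assert (dd_pos : forall m, 0 < dd m) by (intro m; apply Hdd).
  destruct (exists_gauge dd dd_pos) as [g [Hlb Hglb]].
  destruct (Hstab 1 Rlt_0_1) as [r [Hr Hbound1]].
  assert (HK : class_Kinf (fun s => s + g s)).
  { apply Kinf_id_plus.
    - exact (gauge_continuous dd_pos g Hlb Hglb).
    - exact (gauge_mono dd_pos g Hlb Hglb).
    - exact (gauge_nonneg dd_pos g Hglb).
    - exact (gauge_0 dd_pos g Hlb Hglb). }
  exists (fun s => s + g s), (fun s => s + g s), r.
  split; [exact HK|]. split; [exact HK|]. split; [exact Hr|].
  intros t x u Ht Hx Hu.
  pose proof (Rmax_l (vnorm x) (vnorm u)). pose proof (Rmax_r (vnorm x) (vnorm u)).
  pose proof (vnorm_nonneg _ x). pose proof (vnorm_nonneg _ u).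
  assert (Hmax : vnorm (phi t x u) <= g (Rmax (vnorm x) (vnorm u))).
  { apply (gauge_majorant dd_pos g Hglb); [lra| |].
    - apply Hbound1; assumption.
    - intros m Hm. apply Hdd; lra. }
  pose proof (gauge_nonneg dd_pos g Hglb (vnorm x)).
  pose proof (gauge_nonneg dd_pos g Hglb (vnorm u)).
  unfold Rmax in Hmax; destruct (Rle_dec (vnorm x) (vnorm u)); lra.
Qed.
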